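(* Let $(x_n)_{n\in\mathbb N}$ be a block sequence in $J$, let $0<\epsilon<1$ and $\alpha>0$. Assume $I_\infty^*(x_n)=0$ and $\big|\|x_n\|-\alpha\big|<\alpha\epsilon$ for all $n$. Then for every finitely supported sequence of reals $(\lambda_n)$, $(1-\epsilon)\alpha\big(\sum_n\lambda_n^2\big)^{1/2}\le\big\|\sum_n\lambda_nx_n\big\|\le\sqrt2(1+\epsilon)\alpha\big(\sum_n\lambda_n^2\big)^{1/2}$. In particular $(x_n)$ is equivalent to the unit vector basis of $\ell_2$.
   Context: The James space $J$ is the space of real sequences $x=(x(n))_{n\in\mathbb N}$ with $\|x\|=\sup\big(\sum_{i=1}^m|\sum_{k\in I_i}x(k)|^2\big)^{1/2}<\infty$, the supremum taken over all $m$ and all pairwise disjoint finite intervals $I_1,\dots,I_m$ of $\mathbb N$. The unit vectors $(e_n)$ form a basis of $J$; a block sequence is a sequence of nonzero finitely supported vectors with $\max\operatorname{supp}x_n<\min\operatorname{supp}x_{n+1}$. $I_\infty^*\in J^*$ is the functional $I_\infty^*(x)=\sum_{n=1}^\infty x(n)$. *)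

From HB Require Import structures.
From mathcomp Require Import all_boot all_order all_algebra.
From mathcomp Require Import all_classical all_reals all_analysis.
Set Implicit Arguments. Unset Strict Implicit. Unset Printing Implicit Defensive.
Import Order.TTheory GRing.Theory Num.Theory.
Local Open Scope ring_scope.
Local Open Scope classical_set_scope.

(* A finite interval [a, b] = {a, ..., b} of nat is encoded by the pair (a, b) with a <= b. *)
Definition interval_sum {R : realType} (x : nat -> R) (I : nat * nat) : R :=
  \sum_(I.1 <= k < I.2.+1) x k.

Definition disj_intervals (I J : nat * nat) : bool := (I.2 < J.1)%N || (J.2 < I.1)%N.

Definition admissible (Is : seq (nat * nat)) : bool :=
  all (fun I : nat * nat => (I.1 <= I.2)%N) Is && pairwise disj_intervals Is.

(* The James norm: sup over families of pairwise disjoint finite intervals of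
   (sum_i |sum_{k in I_i} x(k)|^2)^{1/2}.  (Finite for finitely supported x.) *)
Definition Jnorm {R : realType} (x : nat -> R) : R :=
  Num.sqrt (sup [set s : R | exists Is : seq (nat * nat),
     admissible Is /\ s = \sum_(I <- Is) (interval_sum x I) ^+ 2]).

Definition fin_supp {R : realType} (x : nat -> R) : Prop :=
  exists N : nat, forall k, (N <= k)%N -> x k = 0.

Definition block_seq {R : realType} (xs : nat -> nat -> R) : Prop :=
  (forall n, fin_supp (xs n)) /\
  (forall n, exists k, xs n k != 0) /\
  (forall n i j, xs n i != 0 -> xs n.+1 j != 0 -> (i < j)%N).

Definition Iinf {R : realType} (x : nat -> R) : R := limn (fun n => \sum_(k < n) x k).

From HB Require Import structures.
From mathcomp Require Import all_boot all_order all_algebra.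
From mathcomp Require Import all_classical all_reals all_analysis.
From mathcomp Require Import lra ring zify.
Set Implicit Arguments.
Unset Strict Implicit.
Unset Printing Implicit Defensive.
Import Order.TTheory GRing.Theory Num.Theory.
Local Open Scope ring_scope.
Local Open Scope classical_set_scope.

(* An interval sum of x_n vanishes unless the interval cuts the support of x_n,
   since I_oo^*(x_n) = 0; and since the supports are successive, at most one block
   is cut at each end of an interval.  Hence every interval sum of
   v = sum_n lam_n x_n has at most two nonzero terms, its square is at most twice
   the sum of their squares, and summing over an admissible family gives
   ||v||^2 <= 2 sum_n lam_n^2 ||x_n||^2.  Conversely, nearly optimal families for
   the x_n, clipped to disjoint windows around their supports, together form one
   admissible family for v, so sum_n lam_n^2 ||x_n||^2 <= ||v||^2. *)

Section JamesNorm.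
Variable R : realType.
Implicit Types (x : nat -> R) (Is : seq (nat * nat)).

Definition in_interval (I : nat * nat) k := (I.1 <= k <= I.2)%N.

Definition within (a b : nat) (I : nat * nat) := (a <= I.1)%N && (I.2 <= b)%N.

Definition supported_in x (a b : nat) := forall k, x k != 0 -> (a <= k <= b)%N.

Definition James_sums x := [set s : R | exists Is,
  admissible Is /\ s = \sum_(I <- Is) interval_sum x I ^+ 2].

Lemma supported_in_fin_supp x a b : supported_in x a b -> fin_supp x.
Proof.
move=> xab; exists b.+1 => k kb; apply/eqP; apply: contraT => /xab /andP[_].
by rewrite leqNgt kb.
Qed.

Lemma sum_ord_vanishing_tail (F : nat -> R) n K : (n <= K)%N ->
  (forall k, (n <= k < K)%N -> F k = 0) -> \sum_(k < K) F k = \sum_(k < n) F k.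
Proof.
move=> nK F0; rewrite -!(big_mkord xpredT) (@big_cat_nat _ _ _ n 0 K _ _ (leq0n n) nK) /=.
by rewrite [X in _ + X]big1_seq ?addr0 // => k /andP[_]; rewrite mem_index_iota; apply: F0.
Qed.

Lemma interval_sumE x M I : (forall k, (M <= k)%N -> x k = 0) ->
  interval_sum x I = \sum_(k < M) (if in_interval I k then x k else 0).
Proof.
move=> xM; pose F k := if in_interval I k then x k else 0.
have F_I2 : \sum_(k < maxn M I.2.+1) F k = \sum_(k < I.2.+1) F k.
  by apply: sum_ord_vanishing_tail; rewrite ?leq_maxr // => k /andP[k2 _]; rewrite /F;
    case: ifP => //; rewrite /in_interval; lia.
have F_M : \sum_(k < maxn M I.2.+1) F k = \sum_(k < M) F k.
  by apply: sum_ord_vanishing_tail; rewrite ?leq_maxl // => k /andP[kM _]; rewrite /F;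
    case: ifP => // _; apply: xM.
rewrite -[RHS]/(\sum_(k < M) F k) -F_M F_I2 /interval_sum big_geq_mkord big_mkcond /=.
by apply: eq_bigr => k _; rewrite /F /in_interval -[(k <= I.2)%N]ltnS ltn_ord andbT.
Qed.

Lemma sum_disjoint_indicator_le Is k (a : R) : 0 <= a -> pairwise disj_intervals Is ->
  \sum_(I <- Is) (if in_interval I k then a else 0) <= a.
Proof.
move=> a_ge0; elim: Is => [|I Is IH]; first by rewrite big_nil.
rewrite /= big_cons => /andP[I_disj Is_disj]; case: ifP => [kI|_]; last by rewrite add0r IH.
rewrite big1_seq ?addr0 // => J /andP[_ JIs].
by move: (allP I_disj J JIs) kI; rewrite /disj_intervals /in_interval; case: ifP => //; lia.
Qed.

Lemma James_sum_le_l1 x M Is : (forall k, (M <= k)%N -> x k = 0) -> admissible Is ->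
  \sum_(I <- Is) interval_sum x I ^+ 2 <= (\sum_(k < M) `|x k|) ^+ 2.
Proof.
move=> xM /andP[_ Is_disj]; set S := \sum_(k < M) `|x k|.
pose T I := \sum_(k < M) (if in_interval I k then `|x k| else 0).
have ST I : `|interval_sum x I| <= T I.
  rewrite (interval_sumE I xM); apply: le_trans (ler_norm_sum _ _ _) _.
  by apply: ler_sum => k _; case: ifP; rewrite ?normr0.
have TS I : T I <= S by apply: ler_sum => k _; case: ifP.
apply: (@le_trans _ _ (\sum_(I <- Is) S * T I)).
  apply: ler_sum => I _; rewrite -real_normK ?num_real // expr2 [S * _]mulrC.
  by apply: ler_pM => //; apply: le_trans (ST I) _.
rewrite -mulr_sumr expr2 ler_wpM2l ?sumr_ge0 // /T exchange_big /=.
by apply: ler_sum => k _; apply: sum_disjoint_indicator_le.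
Qed.

Lemma James_sums0 x : James_sums x 0.
Proof. by exists [::]; rewrite big_nil. Qed.

Lemma has_sup_James_sums x : fin_supp x -> has_sup (James_sums x).
Proof.
move=> [M xM]; split; first by exists 0; apply: James_sums0.
by exists ((\sum_(k < M) `|x k|) ^+ 2) => _ [Is [Is_adm ->]]; apply: James_sum_le_l1.
Qed.

Lemma Jnorm_sqr x : fin_supp x -> Jnorm x ^+ 2 = sup (James_sums x).
Proof.
move=> xfin; rewrite /Jnorm -/(James_sums x) sqr_sqrtr //.
by apply: (sup_upper_bound (has_sup_James_sums xfin)); apply: James_sums0.
Qed.

Lemma James_sum_le_Jnorm_sqr x Is : fin_supp x -> admissible Is ->
  \sum_(I <- Is) interval_sum x I ^+ 2 <= Jnorm x ^+ 2.
Proof.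
move=> xfin Is_adm; rewrite Jnorm_sqr //.
by apply: (sup_upper_bound (has_sup_James_sums xfin)); exists Is.
Qed.

Lemma Jnorm_sqr_le x b :
  (forall Is, admissible Is -> \sum_(I <- Is) interval_sum x I ^+ 2 <= b) ->
  Jnorm x ^+ 2 <= b.
Proof.
move=> le_b; have ub : ubound (James_sums x) b by move=> _ [Is [Is_adm ->]]; apply: le_b.
have hs : has_sup (James_sums x) by split; [exists 0; apply: James_sums0|exists b].
rewrite /Jnorm -/(James_sums x) sqr_sqrtr; last first.
  by apply: (sup_upper_bound hs); apply: James_sums0.
by apply: ge_sup ub; exists 0; apply: James_sums0.
Qed.

Lemma admissible_restrict x a b Is : supported_in x a b -> admissible Is ->
  exists Is', [/\ admissible Is', all (within a b) Is' &
    \sum_(I <- Is') interval_sum x I ^+ 2 = \sum_(I <- Is) interval_sum x I ^+ 2].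
Proof.
move=> xab /andP[Is_wf Is_disj].
pose clip (I : nat * nat) := (maxn I.1 a, minn I.2 b).
have xb k : (b.+1 <= k)%N -> x k = 0.
  by move=> kb; apply/eqP; apply: contraT => /xab; lia.
have clipE I : interval_sum x (clip I) = interval_sum x I.
  rewrite !(interval_sumE _ xb); apply: eq_bigr => k _.
  have [->|/xab] := eqVneq (x k) 0; first by rewrite !if_same.
  by move=> /andP[ak kb]; rewrite /in_interval /clip /= geq_max leq_min ak kb !andbT.
have clip0 I : (minn I.2 b < maxn I.1 a)%N -> interval_sum x (clip I) = 0.
  move=> I_out; rewrite (interval_sumE _ xb) big1 // => k _.
  by rewrite /in_interval /clip /=; case: ifP => //; lia.
exists (map clip (seq.filter (fun I => maxn I.1 a <= minn I.2 b)%N Is)); split.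
- rewrite /admissible all_map pairwise_map; apply/andP; split.
    by apply/allP => I; rewrite mem_filter => /andP[].
  apply: pairwise_filter; move: Is_disj; apply: sub_pairwise => I J.
  by rewrite /disj_intervals /relpre /=; lia.
- by rewrite all_map; apply/allP => I _; rewrite /within /=; lia.
- rewrite big_map big_filter big_mkcond /=; apply: eq_bigr => I _.
  by case: leqP => [_|/clip0 I0]; [rewrite clipE|rewrite -clipE I0 expr0n].
Qed.

Lemma Jnorm_sqr_approx x a b e : supported_in x a b -> 0 < e ->
  exists Is, [/\ admissible Is, all (within a b) Is &
    Jnorm x ^+ 2 - e < \sum_(I <- Is) interval_sum x I ^+ 2].
Proof.
move=> xab e_gt0; have xfin := supported_in_fin_supp xab.
have [_ [Is [Is_adm ->]]] := sup_adherent e_gt0 (has_sup_James_sums xfin).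
have [Is' [Is'_adm Is'_in <-]] := admissible_restrict xab Is_adm.
by exists Is'; rewrite Jnorm_sqr.
Qed.

Lemma sum_big_cat (f : nat * nat -> R) (F : nat -> seq (nat * nat)) K :
  \sum_(I <- \big[cat/[::]]_(n < K) F n) f I = \sum_(n < K) \sum_(I <- F n) f I.
Proof.
elim: K => [|K IH]; first by rewrite !big_ord0 big_nil.
by rewrite !big_ord_recr /= big_cat IH.
Qed.

Lemma Iinf_finE x M : (forall k, (M <= k)%N -> x k = 0) -> Iinf x = \sum_(k < M) x k.
Proof.
move=> xM; rewrite /Iinf; change (limn (fun n => \sum_(k < n) x k) = \sum_(k < M) x k).
apply/cvg_lim => //; apply: cvg_near_cst.
apply: filterS (nbhs_infty_ge M) => n /= Mn.
by apply: sum_ord_vanishing_tail => // k /andP[/xM].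
Qed.

Definition straddles x a := exists i j, [/\ x i != 0, x j != 0, (i < a)%N & (a <= j)%N].

Lemma interval_sum_neq0_straddles x I : fin_supp x -> Iinf x = 0 ->
  interval_sum x I != 0 -> straddles x I.1 \/ straddles x I.2.+1.
Proof.
move=> [M xM] Iinf0 xI_neq0.
have [[k [kI xk]]|none_in] := pselect (exists k, in_interval I k /\ x k != 0); last first.
  exfalso; move/negP: xI_neq0; apply; apply/eqP.
  rewrite (interval_sumE I xM) big1 // => k _.
  by case: ifP => // kI; apply/eqP; apply: contra_notT none_in => xk; exists k.
have [[k' [k'I xk']]|none_out] := pselect (exists k, ~~ in_interval I k /\ x k != 0); last first.
  exfalso; move/negP: xI_neq0; apply; apply/eqP.
  rewrite (interval_sumE I xM) -[RHS]Iinf0 (Iinf_finE xM).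
  apply: eq_bigr => i _; case: ifP => // /negbT iI; apply/esym/eqP.
  by apply: contra_notT none_out => xi; exists i.
move: kI k'I; rewrite /in_interval negb_and -!ltnNge => /andP[k1 k2] /orP[k'1|k'2].
  by left; exists k', k.
by right; exists k, k'.
Qed.

Lemma sqr_sum_single (d : nat -> R) p N : (forall n, d n != 0 -> n = p) ->
  (\sum_(n < N) d n) ^+ 2 = \sum_(n < N) d n ^+ 2.
Proof.
move=> d_supp; elim: N => [|N IH]; first by rewrite !big_ord0 expr0n.
rewrite !big_ord_recr /=; have [->|/d_supp Np] := eqVneq (d N) 0.
  by rewrite addr0 IH expr0n /= addr0.
have d0 (n : 'I_N) : d n = 0.
  by apply/eqP; apply: contraT => /d_supp nP; have := ltn_ord n; rewrite nP -Np ltnn.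
by rewrite !big1 ?add0r // => n _; rewrite d0 // expr0n.
Qed.

Lemma sqr_sum_le_two (c : nat -> R) p q N : (forall n, c n != 0 -> n = p \/ n = q) ->
  (\sum_(n < N) c n) ^+ 2 <= 2 * \sum_(n < N) c n ^+ 2.
Proof.
move=> c_supp; pose d n := if n == p then c n else 0; pose e n := c n - d n.
have d_supp n : d n != 0 -> n = p by rewrite /d; have [->|_] := eqVneq n p; rewrite ?eqxx.
have e_supp n : e n != 0 -> n = q.
  rewrite /e /d; have [_|np] := eqVneq n p; first by rewrite subrr eqxx.
  by rewrite subr0 => /c_supp [nP|] //; rewrite nP eqxx in np.
have sumE : \sum_(n < N) c n = \sum_(n < N) d n + \sum_(n < N) e n.
  by rewrite -big_split; apply: eq_bigr => n _; rewrite /e /= addrC subrK.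
have sqr_sumE : \sum_(n < N) c n ^+ 2 = \sum_(n < N) d n ^+ 2 + \sum_(n < N) e n ^+ 2.
  rewrite -big_split; apply: eq_bigr => n _; rewrite /e /d /=.
  by have [_|_] := eqVneq (n : nat) p; rewrite ?subrr ?subr0 expr0n ?addr0 ?add0r.
rewrite sumE sqr_sumE -(sqr_sum_single N d_supp) -(sqr_sum_single N e_supp).
by have := sqr_ge0 (\sum_(n < N) d n - \sum_(n < N) e n); rewrite sqrrB sqrrD; lra.
Qed.

Lemma interval_sum_comb (xs : nat -> nat -> R) (lam : nat -> R) N I :
  interval_sum (fun k => \sum_(n < N) lam n * xs n k) I =
  \sum_(n < N) lam n * interval_sum (xs n) I.
Proof. by rewrite /interval_sum exchange_big; apply: eq_bigr => n _; rewrite mulr_sumr. Qed.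

End JamesNorm.

Lemma block_seq_windows (R : realType) (xs : nat -> nat -> R) : block_seq xs ->
  exists lo hi : nat -> nat, [/\ forall n, supported_in (xs n) (lo n) (hi n),
    forall n, (lo n <= hi n)%N & forall n, (hi n < lo n.+1)%N].
Proof.
case=> xs_fin [xs_neq0 xs_sep].
have hull n : exists w : nat * nat,
    [/\ xs n w.1 != 0, xs n w.2 != 0 & supported_in (xs n) w.1 w.2].
  have [M xM] := xs_fin n.
  have supp_le i : xs n i != 0 -> (i <= M)%N.
    by move=> xi; rewrite leqNgt; apply: contraNN xi => Mi; rewrite xM // ltnW.
  have [a xa a_min] := ex_minnP (xs_neq0 n).
  have [b xb b_max] := ex_maxnP (xs_neq0 n) supp_le.
  by exists (a, b); split => // k xk; rewrite a_min ?b_max.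
have /choice [w w_spec] := hull.
exists (fun n => (w n).1), (fun n => (w n).2); split => n.
- by case: (w_spec n).
- by case: (w_spec n) => xa _ /(_ _ xa)/andP[].
- by case: (w_spec n) (w_spec n.+1) => _ xb _ [xa _ _]; apply: xs_sep xb xa.
Qed.

Section BlockSequences.
Variables (R : realType) (xs : nat -> nat -> R) (lo hi : nat -> nat).
Hypothesis xs_supp : forall n, supported_in (xs n) (lo n) (hi n).
Arguments xs_supp : clear implicits.
Hypothesis lo_le_hi : forall n, (lo n <= hi n)%N.
Hypothesis hi_lt_lo_succ : forall n, (hi n < lo n.+1)%N.

Definition comb (lam : nat -> R) N k := \sum_(n < N) lam n * xs n k.

Lemma hi_lt_lo n m : (n < m)%N -> (hi n < lo m)%N.
Proof.
elim: m => [//|m IH]; rewrite ltnS leq_eqVlt => /orP[/eqP->|/IH nm].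
  exact: hi_lt_lo_succ.
exact: ltn_trans (leq_trans nm (lo_le_hi m)) (hi_lt_lo_succ m).
Qed.

Lemma xs_fin_supp n : fin_supp (xs n).
Proof. exact: supported_in_fin_supp (xs_supp n). Qed.

Lemma comb_fin_supp (lam : nat -> R) N : fin_supp (comb lam N).
Proof.
exists (lo N) => k Nk; rewrite /comb big1 // => n _.
apply/eqP; rewrite mulf_eq0; apply/orP; right; apply: contraT => /xs_supp/andP[_ kn].
by have := hi_lt_lo (ltn_ord n); lia.
Qed.

Lemma xs_eq0_window n m k : m != n -> (lo n <= k <= hi n)%N -> xs m k = 0.
Proof.
move=> mn /andP[nk kn]; apply/eqP; apply: contraT => /xs_supp/andP[mk km].
by case: (ltngtP m n) => [/hi_lt_lo|/hi_lt_lo|m_eq_n]; [lia|lia|rewrite m_eq_n eqxx in mn].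
Qed.

Lemma straddles_unique a n m : straddles (xs n) a -> straddles (xs m) a -> n = m.
Proof.
have no_two n' m' : (n' < m')%N -> straddles (xs n') a -> ~ straddles (xs m') a.
  move=> nm [_ [j [_ /xs_supp/andP[_ jn] _ aj]]] [i [_ [/xs_supp/andP[im _] _ ia _]]].
  by have := hi_lt_lo nm; lia.
move=> sn sm; case: (ltngtP n m) => // [nm|mn]; first by case: (no_two _ _ nm sn).
by case: (no_two _ _ mn sm).
Qed.

Lemma straddling_block a : exists p, forall n, straddles (xs n) a -> n = p.
Proof.
have [[p sp]|none] := pselect (exists n, straddles (xs n) a).
  by exists p => n sn; apply: straddles_unique sn sp.
by exists 0%N => n sn; case: none; exists n.
Qed.

Lemma interval_sum_comb_window (lam : nat -> R) N n I :
  (n < N)%N -> within (lo n) (hi n) I ->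
  interval_sum (comb lam N) I = lam n * interval_sum (xs n) I.
Proof.
move=> nN /andP[nI In]; rewrite interval_sum_comb (bigD1 (Ordinal nN)) //= big1 ?addr0 //.
move=> m; rewrite -(inj_eq val_inj) /= => mn.
rewrite /interval_sum big1_seq ?mulr0 // => k /andP[_]; rewrite mem_index_iota => /andP[Ik kI].
by apply: xs_eq0_window mn _; apply/andP; split; lia.
Qed.

Lemma admissible_cat_windows (F : nat -> seq (nat * nat)) K :
  (forall n, admissible (F n)) -> (forall n, all (within (lo n) (hi n)) (F n)) ->
  admissible (\big[cat/[::]]_(n < K) F n).
Proof.
move=> F_adm F_in; suff [] : admissible (\big[cat/[::]]_(n < K) F n) /\
    all (fun J => J.2 < lo K)%N (\big[cat/[::]]_(n < K) F n) by [].
elim: K => [|K [IH_adm IH_lt]]; first by rewrite big_ord0.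
rewrite big_ord_recr /=; move: IH_adm (F_adm K) => /andP[wf1 disj1] /andP[wf2 disj2].
rewrite /admissible !all_cat wf1 wf2 pairwise_cat disj1 disj2 !andbT /=; split.
  apply/allrelP => I J IG JF; move: (allP IH_lt I IG) (allP (F_in K) J JF) => /= IK.
  by case/andP => KJ _; rewrite /disj_intervals (leq_trans IK KJ).
apply/andP; split.
  apply: sub_all IH_lt => I /= IK.
  exact: ltn_trans (leq_trans IK (lo_le_hi K)) (hi_lt_lo_succ K).
by apply: sub_all (F_in K) => I /andP[_ IK]; apply: leq_ltn_trans IK (hi_lt_lo_succ K).
Qed.

Lemma Jnorm_comb_sqr_ge (lam : nat -> R) N :
  \sum_(n < N) lam n ^+ 2 * Jnorm (xs n) ^+ 2 <= Jnorm (comb lam N) ^+ 2.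
Proof.
suff approx (e : R) : 0 < e -> \sum_(n < N) lam n ^+ 2 * Jnorm (xs n) ^+ 2 <=
    Jnorm (comb lam N) ^+ 2 + e by apply/ler_addgt0Pr => e; apply: approx.
move=> e_gt0; set S2 := \sum_(n < N) lam n ^+ 2.
have S2_ge0 : 0 <= S2 by apply: sumr_ge0 => n _; apply: sqr_ge0.
pose d := e / (S2 + 1).
have S2_lt : 0 < S2 + 1 by rewrite ltr_wpDl.
have d_gt0 : 0 < d by rewrite divr_gt0.
have dS2 : d * S2 <= e.
  by rewrite mulrAC ler_pdivrMr // ler_wpM2l ?ltW //; lra.
have /choice [F F_spec] n : exists Is, [/\ admissible Is, all (within (lo n) (hi n)) Is &
    Jnorm (xs n) ^+ 2 - d < \sum_(I <- Is) interval_sum (xs n) I ^+ 2].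
  exact: Jnorm_sqr_approx.
have F_adm n : admissible (F n) by case: (F_spec n).
have F_in n : all (within (lo n) (hi n)) (F n) by case: (F_spec n).
have block_le (n : 'I_N) : lam n ^+ 2 * Jnorm (xs n) ^+ 2 <=
    \sum_(I <- F n) interval_sum (comb lam N) I ^+ 2 + d * lam n ^+ 2.
  have [_ _ Fn_close] := F_spec n.
  rewrite big_seq (eq_bigr (fun I => lam n ^+ 2 * interval_sum (xs n) I ^+ 2)); last first.
    move=> I IF; have I_in := allP (F_in n) I IF.
    by rewrite (interval_sum_comb_window _ (ltn_ord n) I_in) exprMn.
  rewrite -big_seq -mulr_sumr [d * _]mulrC -mulrDr ler_wpM2l ?sqr_ge0 //.
  by rewrite -lerBlDr ltW.
apply: le_trans (ler_sum _ (fun n _ => block_le n)) _.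
rewrite big_split /= -mulr_sumr -/S2 -sum_big_cat lerD //.
exact: James_sum_le_Jnorm_sqr (comb_fin_supp lam N) (admissible_cat_windows N F_adm F_in).
Qed.

Hypothesis Iinf_xs : forall n, Iinf (xs n) = 0.

Lemma interval_sum_comb_sqr_le (lam : nat -> R) N I :
  interval_sum (comb lam N) I ^+ 2 <= 2 * \sum_(n < N) (lam n * interval_sum (xs n) I) ^+ 2.
Proof.
have [p p_uniq] := straddling_block I.1.
have [q q_uniq] := straddling_block I.2.+1.
rewrite /comb interval_sum_comb.
apply: (sqr_sum_le_two (c := fun n => lam n * interval_sum (xs n) I) (p := p) (q := q)) => n.
rewrite mulf_eq0 negb_or => /andP[_ /interval_sum_neq0_straddles].
by case/(_ (xs_fin_supp n) (Iinf_xs n)) => [/p_uniq|/q_uniq]; [left|right].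
Qed.

Lemma Jnorm_comb_sqr_le (lam : nat -> R) N :
  Jnorm (comb lam N) ^+ 2 <= 2 * \sum_(n < N) lam n ^+ 2 * Jnorm (xs n) ^+ 2.
Proof.
apply: Jnorm_sqr_le => Is Is_adm.
apply: le_trans (ler_sum _ (fun I _ => interval_sum_comb_sqr_le lam N I)) _.
rewrite -mulr_sumr exchange_big /= ler_wpM2l //; apply: ler_sum => n _.
under eq_bigr do rewrite exprMn.
rewrite -mulr_sumr ler_wpM2l ?sqr_ge0 //.
exact: James_sum_le_Jnorm_sqr (xs_fin_supp n) Is_adm.
Qed.

End BlockSequences.

Theorem mainTheorem12 (R : realType) (xs : nat -> nat -> R) (eps alpha : R) :
  block_seq xs -> 0 < eps -> eps < 1 -> 0 < alpha ->
  (forall n, Iinf (xs n) = 0) ->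
  (forall n, `|Jnorm (xs n) - alpha| < alpha * eps) ->
  forall (N : nat) (lam : nat -> R),
    let v := fun k => \sum_(n < N) lam n * xs n k in
    let l2 := Num.sqrt (\sum_(n < N) lam n ^+ 2) in
    (1 - eps) * alpha * l2 <= Jnorm v /\
    Jnorm v <= Num.sqrt 2 * (1 + eps) * alpha * l2.
Proof.
move=> xs_block eps_gt0 eps_lt1 alpha_gt0 Iinf0 Jxs_near N lam v l2.
have [lo [hi [xs_supp lo_le_hi hi_lt_lo]]] := block_seq_windows xs_block.
have S2_ge0 : 0 <= \sum_(n < N) lam n ^+ 2 by apply: sumr_ge0 => n _; apply: sqr_ge0.
have [Jxs_ge Jxs_le] : (forall n, (1 - eps) * alpha <= Jnorm (xs n)) /\
    (forall n, Jnorm (xs n) <= (1 + eps) * alpha).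
  by split=> n; have := Jxs_near n; rewrite ltr_norml => /andP[? ?]; lra.
have c_ge0 : 0 <= (1 - eps) * alpha by apply: mulr_ge0; lra.
have lower : ((1 - eps) * alpha * l2) ^+ 2 <= Jnorm v ^+ 2.
  apply: le_trans (Jnorm_comb_sqr_ge xs_supp lo_le_hi hi_lt_lo lam N).
  rewrite exprMn sqr_sqrtr // mulrC mulr_suml; apply: ler_sum => n _.
  by rewrite ler_wpM2l ?sqr_ge0 // ler_sqr ?nnegrE ?Jxs_ge ?sqrtr_ge0.
have upper : Jnorm v ^+ 2 <= (Num.sqrt 2 * (1 + eps) * alpha * l2) ^+ 2.
  apply: le_trans (Jnorm_comb_sqr_le xs_supp lo_le_hi hi_lt_lo Iinf0 lam N) _.
  have -> : (Num.sqrt 2 * (1 + eps) * alpha * l2) ^+ 2 =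
      2 * (((1 + eps) * alpha) ^+ 2 * \sum_(n < N) lam n ^+ 2).
    by rewrite !exprMn !sqr_sqrtr //; ring.
  rewrite ler_wpM2l // mulrC mulr_suml; apply: ler_sum => n _.
  rewrite ler_wpM2l ?sqr_ge0 // ler_sqr ?nnegrE ?Jxs_le ?sqrtr_ge0 //.
  by apply: mulr_ge0; lra.
have [Jv_ge0 l2_ge0] : 0 <= Jnorm v /\ 0 <= l2 by split; apply: sqrtr_ge0.
by split; [move: lower|move: upper]; rewrite ler_sqr ?nnegrE ?sqrtr_ge0 ?mulr_ge0 //; lra.
Qed.
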